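(* For all integers $0\le k\le j$, $$\sum_{h=k}^j(-q)^ha^hq^{k^2-2jh}{h\brack k}_+\,a^{-j+h}q^{(j-h)^2}{j\brack h}_+\frac{(a^2q^{2-2j};q^2)_{j-h}}{(q^2;q^2)_{j-h}}=(-q)^ka^{2k-j}q^{-4kj+2k^2+j^2}{j\brack k}_+\frac{(a^2q^{2-4j+2k};q^2)_{j-k}}{(q^2;q^2)_{j-k}}.$$
   Context: $(x;q^2)_n=\prod_{i=0}^{n-1}(1-xq^{2i})$, $(q^2;q^2)_n=\prod_{i=1}^n(1-q^{2i})$, and ${N\brack k}_+=\frac{(q^2;q^2)_N}{(q^2;q^2)_k(q^2;q^2)_{N-k}}$. (The identity expresses the reduced North–South closure of a top twist applied to the basis web $RI[j,k]$.) *)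

From HB Require Import structures.
From mathcomp Require Import all_boot all_order all_algebra.
Set Implicit Arguments. Unset Strict Implicit. Unset Printing Implicit Defensive.
Import Order.TTheory GRing.Theory Num.Theory.
Local Open Scope ring_scope.

Definition qpoch (F : fieldType) (x q : F) (n : nat) : F :=
  \prod_(i < n) (1 - x * q ^+ (2 * i)).

Definition qfac (F : fieldType) (q : F) (n : nat) : F :=
  \prod_(i < n) (1 - q ^+ (2 * i.+1)).

Definition qbin (F : fieldType) (q : F) (N k : nat) : F :=
  qfac q N / (qfac q k * qfac q (N - k)).

From HB Require Import structures.
From mathcomp Require Import all_boot all_order all_algebra.
From mathcomp Require Import ring zify.
Import Order.TTheory GRing.Theory Num.Theory.
Set Implicit Arguments. Unset Strict Implicit. Unset Printing Implicit Defensive.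
Local Open Scope ring_scope.

(* Write j = k + n and b = a^2 q^(2-2j).  The argument of the q-Pochhammer
   symbol on the right factors as q^(-2n) b, so the q-binomial expansion
     (x y; q^2)_n = sum_m [n, m] y^m (x; q^2)_m (y; q^2)_(n-m)
   turns the right-hand side into a sum over m <= n.  Since
   (q^(-2n); q^2)_m = (-1)^m q^(m^2 - m - 2nm) (q^2;q^2)_n / (q^2;q^2)_(n-m),
   its m-th term is exactly the term h = k + m of the left-hand side. *)

Section QCalculus.
Variables (F : fieldType) (q : F).

(* Division-free q^2-Gaussian binomial, given by the q-Pascal rule. *)
Fixpoint gauss_binom (n m : nat) : F :=
  match n, m with
  | _, 0 => 1
  | 0, _.+1 => 0
  | n'.+1, m'.+1 => q ^+ (2 * m'.+1) * gauss_binom n' m'.+1 + gauss_binom n' m'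
  end.

Lemma gauss_binom0 n : gauss_binom n 0 = 1. Proof. by case: n. Qed.

Lemma small_gauss_binom n m : (n < m)%N -> gauss_binom n m = 0.
Proof.
elim: n m => [|n IHn] [|m] //= ltnm.
by rewrite !IHn ?mulr0 ?addr0 // ltnW.
Qed.

Lemma qfac0 : qfac q 0 = 1. Proof. by rewrite /qfac big_ord0. Qed.

Lemma qfacS n : qfac q n.+1 = qfac q n * (1 - q ^+ (2 * n.+1)).
Proof. by rewrite /qfac big_ord_recr. Qed.

Lemma gauss_binom_qfac n m : (m <= n)%N ->
  gauss_binom n m * qfac q m * qfac q (n - m) = qfac q n.
Proof.
elim: n m => [|n IHn] [|m] lemn //=; rewrite ?subn0 ?qfac0 ?mul1r //.
rewrite subSS; have [ltmn | lenm] := ltnP m n.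
- have nmS : (n - m = (n - m.+1).+1)%N by lia.
  set e := (2 * (n - m.+1).+1)%N.
  have -> : (q ^+ (2 * m.+1) * gauss_binom n m.+1 + gauss_binom n m)
              * qfac q m.+1 * qfac q (n - m)
      = q ^+ (2 * m.+1) * (gauss_binom n m.+1 * qfac q m.+1 * qfac q (n - m.+1))
          * (1 - q ^+ e)
        + gauss_binom n m * qfac q m * qfac q (n - m) * (1 - q ^+ (2 * m.+1)).
    by rewrite (qfacS m) nmS (qfacS (n - m.+1)); ring.
  rewrite IHn // IHn ?(ltnW ltmn) // qfacS.
  have -> : (2 * n.+1 = 2 * m.+1 + e)%N by rewrite /e; lia.
  by rewrite exprD; ring.
- have -> : m = n by lia.
  rewrite small_gauss_binom // mulr0 add0r subnn qfac0 mulr1 qfacS.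
  by have := IHn n (leqnn n); rewrite subnn qfac0 mulr1 => {2}<-; ring.
Qed.

Lemma qpoch0 x : qpoch x q 0 = 1. Proof. by rewrite /qpoch big_ord0. Qed.

Lemma qpochS x n : qpoch x q n.+1 = (1 - x) * qpoch (x * q ^+ 2) q n.
Proof.
rewrite /qpoch big_ord_recl /= muln0 expr0 mulr1; congr (_ * _).
by apply: eq_bigr => i _; rewrite -mulrA -exprD /bump /=; congr (1 - x * q ^+ _); lia.
Qed.

Lemma qpochSr x n : qpoch x q n.+1 = qpoch x q n * (1 - x * q ^+ (2 * n)).
Proof. by rewrite /qpoch big_ord_recr. Qed.

Theorem qpoch_mul_expand x y n :
  qpoch (x * y) q n =
  \sum_(m < n.+1) gauss_binom n m * y ^+ m * qpoch x q m * qpoch y q (n - m).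
Proof.
elim: n x y => [|n IHn] x y; first by rewrite big_ord1 !qpoch0 expr0 !mulr1.
have expandA : (1 - y) * qpoch (x * (y * q ^+ 2)) q n = qpoch y q n.+1 +
    \sum_(m < n.+1) q ^+ (2 * m.+1) * gauss_binom n m.+1 * y ^+ m.+1
                    * qpoch x q m.+1 * qpoch y q (n - m).
  rewrite [in RHS]big_ord_recr /= small_gauss_binom // !mulr0 !mul0r addr0.
  rewrite IHn big_ord_recl /= gauss_binom0 subn0 qpoch0 !mulr1 !qpochS.
  rewrite mul1r mulrDr; congr (_ + _); rewrite mulr_sumr; apply: eq_bigr => i _.
  have -> : (n - i = (n - i.+1).+1)%N by have := ltn_ord i; lia.
  by rewrite /bump /= add1n (qpochS y) exprMn -exprM; ring.
have expandB : y * ((1 - x) * qpoch (x * (y * q ^+ 2)) q n) =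
    \sum_(m < n.+1) gauss_binom n m * y ^+ m.+1 * qpoch x q m.+1 * qpoch y q (n - m).
  have -> : x * (y * q ^+ 2) = x * q ^+ 2 * y by ring.
  rewrite IHn !mulr_sumr; apply: eq_bigr => i _.
  by rewrite (qpochS x) (exprS y); ring.
rewrite big_ord_recl /= expr0 qpoch0 subn0 !mul1r.
under eq_bigr => i _ do rewrite /bump /= !add0n add1n subSS !mulrDl.
rewrite big_split /= addrA -expandA -expandB qpochS.
by rewrite -mulrA; ring.
Qed.

Hypothesis q_neq0 : q != 0.

Lemma qpoch_qpowN n i : (i <= n)%N ->
  qpoch (q ^ (- (2 * n)%:Z)) q i * qfac q (n - i)
  = (-1) ^+ i * q ^ ((i * i)%:Z - i%:Z - (2 * n * i)%:Z) * qfac q n.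
Proof.
elim: i => [|i IHi] le_in.
  by rewrite qpoch0 subn0 expr0 !mul1r !muln0 !subr0 expr0z mul1r.
have nS : (n - i = (n - i.+1).+1)%N by lia.
set d := (n - i.+1).+1; set w := q ^ (- (2 * d)%:Z).
have qpoch_factor : q ^ (- (2 * n)%:Z) * q ^+ (2 * i) = w.
  by rewrite exprnP -expfzDr //; congr (_ ^ _); rewrite /d; lia.
have w_inv : w * q ^+ (2 * d) = 1.
  by rewrite exprnP -expfzDr // -(expr0z q); congr (_ ^ _); lia.
have exponentS : q ^ ((i.+1 * i.+1)%:Z - i.+1%:Z - (2 * n * i.+1)%:Z)
    = w * q ^ ((i * i)%:Z - i%:Z - (2 * n * i)%:Z).
  by rewrite -expfzDr //; congr (_ ^ _); rewrite /d; lia.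
have := IHi (ltnW le_in); rewrite nS qfacS -/d => IH.
have one_sub_w : 1 - w = - w * (1 - q ^+ (2 * d)).
  by rewrite mulNr mulrBr mulr1 w_inv; ring.
rewrite qpochSr qpoch_factor exponentS exprS one_sub_w.
transitivity (- w * (qpoch (q ^ (- (2 * n)%:Z)) q i
                     * (qfac q (n - i.+1) * (1 - q ^+ (2 * d))))); first ring.
by rewrite IH; ring.
Qed.

End QCalculus.

Lemma summand_monomial_eq (F : fieldType) (a q : F) (m k t : nat) :
  a != 0 -> q != 0 ->
  let j := (k + (m + t))%N in
  (- q) ^+ (m + k) * a ^+ (m + k) * q ^ ((k ^ 2)%:Z - (2 * j * (m + k))%:Z)
    * a ^ ((m + k)%:Z - j%:Z) * q ^+ (t ^ 2)
  = (- q) ^+ k * a ^ ((2 * k)%:Z - j%:Z)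
    * q ^ (- (4 * k * j)%:Z + (2 * k ^ 2)%:Z + (j ^ 2)%:Z)
    * (a ^+ 2 * q ^ (2%:Z - (2 * j)%:Z)) ^+ m
    * ((-1) ^+ m * q ^ ((m * m)%:Z - m%:Z - (2 * (m + t) * m)%:Z)).
Proof.
move=> a_neq0 q_neq0 j.
set qe := ((m + k)%:Z + (k ^ 2)%:Z - (2 * j * (m + k))%:Z + (t ^ 2)%:Z).
set ae := ((m + k)%:Z + (m + k)%:Z - j%:Z).
transitivity ((-1) ^+ (m + k) * q ^ qe * a ^ ae).
  have -> : q ^ qe = q ^+ (m + k) * q ^ ((k ^ 2)%:Z - (2 * j * (m + k))%:Z) * q ^+ (t ^ 2).
    by rewrite !exprnP -!expfzDr //; congr (_ ^ _); rewrite /qe; lia.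
  have -> : a ^ ae = a ^+ (m + k) * a ^ ((m + k)%:Z - j%:Z).
    by rewrite !exprnP -!expfzDr //; congr (_ ^ _); rewrite /ae; lia.
  by rewrite (exprNn q); ring.
have -> : q ^ qe = q ^+ k * q ^ (- (4 * k * j)%:Z + (2 * k ^ 2)%:Z + (j ^ 2)%:Z)
    * q ^ ((2%:Z - (2 * j)%:Z) * m%:Z) * q ^ ((m * m)%:Z - m%:Z - (2 * (m + t) * m)%:Z).
  by rewrite !exprnP -!expfzDr //; congr (_ ^ _); rewrite /qe /j; lia.
have -> : a ^ ae = a ^ ((2 * k)%:Z - j%:Z) * a ^+ (2 * m).
  by rewrite !exprnP -!expfzDr //; congr (_ ^ _); rewrite /ae; lia.
rewrite exprMn -exprM (exprnP (q ^ _) m) exprz_exp (exprNn q) (exprD (-1)).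
ring.
Qed.

Lemma summand_eq (F : fieldType) (a q : F) (m k j : nat) :
  a != 0 -> q != 0 -> (forall n, (n <= j)%N -> qfac q n != 0) -> (m + k <= j)%N ->
  (- q) ^+ (m + k) * a ^+ (m + k) * q ^ ((k ^ 2)%:Z - (2 * j * (m + k))%:Z)
    * qbin q (m + k) k * a ^ ((m + k)%:Z - j%:Z) * q ^+ ((j - (m + k)) ^ 2)
    * qbin q j (m + k)
    * (qpoch (a ^+ 2 * q ^ (2%:Z - (2 * j)%:Z)) q (j - (m + k)) / qfac q (j - (m + k)))
  = (- q) ^+ k * a ^ ((2 * k)%:Z - j%:Z)
    * q ^ (- (4 * k * j)%:Z + (2 * k ^ 2)%:Z + (j ^ 2)%:Z) * qbin q j k
    * (gauss_binom q (j - k) m * (a ^+ 2 * q ^ (2%:Z - (2 * j)%:Z)) ^+ m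
       * qpoch (q ^ (- (2 * (j - k))%:Z)) q m
       * qpoch (a ^+ 2 * q ^ (2%:Z - (2 * j)%:Z)) q (j - k - m) / qfac q (j - k)).
Proof.
move=> a_neq0 q_neq0 qfac_neq0 le_mkj.
have [t def_j] : exists t, j = (k + (m + t))%N by exists (j - (m + k))%N; lia.
have qfac_t : qfac q t != 0 by apply: qfac_neq0; lia.
have qfac_m : qfac q m != 0 by apply: qfac_neq0; lia.
have qfac_k : qfac q k != 0 by apply: qfac_neq0; lia.
have qfac_mk : qfac q (m + k) != 0 by apply: qfac_neq0; lia.
have qfac_mt : qfac q (m + t) != 0 by apply: qfac_neq0; lia.
have gbinomE : gauss_binom q (m + t) m = qfac q (m + t) / (qfac q m * qfac q t).
  by rewrite -(gauss_binom_qfac q (leq_addr t m)) addKn; field; rewrite qfac_t qfac_m.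
have qpochE : qpoch (q ^ (- (2 * (m + t))%:Z)) q m
    = (-1) ^+ m * q ^ ((m * m)%:Z - m%:Z - (2 * (m + t) * m)%:Z) * qfac q (m + t) / qfac q t.
  by rewrite -(qpoch_qpowN q_neq0 (leq_addr t m)) addKn; field.
subst j; rewrite !addKn gbinomE qpochE /qbin !addKn addnK.
have -> : (k + (m + t) - (m + k) = t)%N by lia.
set b := a ^+ 2 * q ^ (2%:Z - (2 * (k + (m + t)))%:Z).
transitivity (((- q) ^+ (m + k) * a ^+ (m + k)
    * q ^ ((k ^ 2)%:Z - (2 * (k + (m + t)) * (m + k))%:Z)
    * a ^ ((m + k)%:Z - (k + (m + t))%:Z) * q ^+ (t ^ 2))
  * (qfac q (m + k) / (qfac q k * qfac q m)
     * (qfac q (k + (m + t)) / (qfac q (m + k) * qfac q t)) * (qpoch b q t / qfac q t))).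
  by ring.
by rewrite summand_monomial_eq //; field; rewrite qfac_mt qfac_t qfac_m qfac_k qfac_mk.
Qed.

Theorem mainTheorem8 (F : fieldType) (a q : F) (k j : nat)
  (ha : a != 0) (hq : q != 0)
  (hqfac : forall n : nat, (n <= j)%N -> qfac q n != 0)
  (hkj : (k <= j)%N) :
  \sum_(k <= h < j.+1)
     ((- q) ^+ h * a ^+ h * q ^ ((k ^ 2)%:Z - (2 * j * h)%:Z) * qbin q h k
      * a ^ (h%:Z - j%:Z) * q ^+ ((j - h) ^ 2) * qbin q j h
      * (qpoch (a ^+ 2 * q ^ (2%:Z - (2 * j)%:Z)) q (j - h) / qfac q (j - h)))
  = (- q) ^+ k * a ^ ((2 * k)%:Z - j%:Z)
      * q ^ (- (4 * k * j)%:Z + (2 * k ^ 2)%:Z + (j ^ 2)%:Z) * qbin q j k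
      * (qpoch (a ^+ 2 * q ^ (2%:Z - (4 * j)%:Z + (2 * k)%:Z)) q (j - k)
         / qfac q (j - k)).
Proof.
have split_arg : a ^+ 2 * q ^ (2%:Z - (4 * j)%:Z + (2 * k)%:Z)
    = q ^ (- (2 * (j - k))%:Z) * (a ^+ 2 * q ^ (2%:Z - (2 * j)%:Z)).
  by rewrite mulrCA -expfzDr //; congr (_ * _ ^ _); lia.
rewrite split_arg qpoch_mul_expand mulr_suml mulr_sumr.
rewrite (big_addn 0 _ k) subSn // big_mkord.
apply: eq_bigr => m _; apply: summand_eq => //.
by have := ltn_ord m; lia.
Qed.
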